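(* Let $A$ be a bounded linear operator on a complex Hilbert space $\mathcal{H}$ whose numerical range $W(A) = \{\langle Ax, x\rangle : x \in \mathcal{H}, \|x\| = 1\}$ is elliptical, i.e. (up to closure) $W(A)$ is a region in $\mathbb{C}$ bounded by an ellipse. Then \[ \|A^*A - AA^*\| \le \frac{4}{\pi}\, S(W(A)), \] where $S(W(A))$ denotes the area (planar Lebesgue measure) of $W(A)$. *)

From HB Require Import structures.
From mathcomp Require Import all_boot all_order all_algebra.
From mathcomp Require Import all_classical all_reals all_analysis.
From mathcomp Require Import complex.
Set Implicit Arguments. Unset Strict Implicit. Unset Printing Implicit Defensive.
Import Order.TTheory GRing.Theory Num.Theory numFieldNormedType.Exports.
Local Open Scope classical_set_scope.
Local Open Scope ring_scope.
Local Open Scope complex_scope.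

Section Hilbert.
Variables (R : realType) (H : lmodType R[i]) (ip : H -> H -> R[i]).

Definition hnorm (x : H) : R := Num.sqrt (complex.Re (ip x x)).

Definition is_inner_product : Prop :=
  [/\ (forall (a : R[i]) (x y z : H), ip (a *: x + y) z = a * ip x z + ip y z),
      (forall x y : H, ip y x = conjc (ip x y)),
      (forall x : H, 0 <= ip x x) &
      (forall x : H, ip x x = 0 -> x = 0)].

Definition is_complete : Prop :=
  forall u : nat -> H,
    (forall e : R, 0 < e -> exists N : nat, forall m n : nat,
        (N <= m)%N -> (N <= n)%N -> hnorm (u m - u n) < e) ->
    exists l : H, forall e : R, 0 < e -> exists N : nat, forall n : nat,
        (N <= n)%N -> hnorm (u n - l) < e.

Definition is_hilbert : Prop := is_inner_product /\ is_complete.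

Definition bounded_op (A : H -> H) : Prop :=
  exists M : R, forall x : H, hnorm (A x) <= M * hnorm x.

Definition is_adjoint (A B : H -> H) : Prop :=
  forall x y : H, ip (A x) y = ip x (B y).

Definition opnorm (T : H -> H) : R :=
  sup [set hnorm (T x) | x in [set x : H | hnorm x <= 1]].

Definition numerical_range (A : H -> H) : set R[i] :=
  [set ip (A x) x | x in [set x : H | hnorm x = 1]].
End Hilbert.

Definition toR2 (R : realType) (z : R[i]) : R * R := (complex.Re z, complex.Im z).

(* closed region bounded by an ellipse with center (cx,cy), semi-axes a,b > 0,
   rotated by the angle whose (cos, sin) is (p, q) *)
Definition ellipse_region (R : realType) (cx cy a b p q : R) : set (R * R) :=
  [set z | exists x y : R, (x / a) ^+ 2 + (y / b) ^+ 2 <= 1 /\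
           z = (cx + p * x - q * y, cy + q * x + p * y)].

Definition elliptical (R : realType) (W : set R[i]) : Prop :=
  exists cx cy a b p q : R, [/\ 0 < a, 0 < b, p ^+ 2 + q ^+ 2 = 1 &
    closure (@toR2 R @` W) = ellipse_region cx cy a b p q].

(* planar Lebesgue measure (area) of W; since the boundary of an ellipse is
   null, we measure the (Borel) closure of W *)
Definition area (R : realType) (W : set R[i]) : \bar R :=
  ((@lebesgue_measure R) \x (@lebesgue_measure R))%E (closure (@toR2 R @` W)).

(* Write A = c + w B with |w| = 1, where c is the centre of the ellipse and w
   its rotation, so that the numerical range of B lies in the rectangle [-a, a] x [-b, b]
   spanned by the semi-axes; then A^*A - AA^* = B^*B - BB^*.  With B = X + iY, X and Y
   self-adjoint, the numerical ranges of X and Y lie in [-a, a] and [-b, b], so ||X|| <= a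
   and ||Y|| <= b by polarization, and B^*B - BB^* = 2i(XY - YX) has norm at most 4ab.
   Finally the ellipse has area pi a b, bounded below by integrating the lengths of its
   vertical sections. *)

From HB Require Import structures.
From mathcomp Require Import all_boot all_order all_algebra.
From mathcomp Require Import all_classical all_reals all_analysis.
From mathcomp Require Import complex.
From mathcomp Require Import ring lra.
Set Implicit Arguments. Unset Strict Implicit. Unset Printing Implicit Defensive.
Import Order.TTheory GRing.Theory Num.Theory numFieldNormedType.Exports.
Local Open Scope ring_scope.

(* Unqualified, [Re] and [Im] would be the parts in a numClosedFieldType. *)
Local Notation Re := (@complex.Re _).
Local Notation Im := (@complex.Im _).

Section ComplexParts.
Variable R : rcfType.
Implicit Types (x y : R[i]) (k : R).
Local Open Scope complex_scope.
Lemma ReD x y : Re (x + y) = Re x + Re y. Proof. by case: x y => [? ?] [? ?]. Qed.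
Lemma ImD x y : Im (x + y) = Im x + Im y. Proof. by case: x y => [? ?] [? ?]. Qed.
Lemma ReN x : Re (- x) = - Re x. Proof. by case: x. Qed.
Lemma ImN x : Im (- x) = - Im x. Proof. by case: x. Qed.
Lemma ReM x y : Re (x * y) = Re x * Re y - Im x * Im y.
Proof. by case: x y => [? ?] [? ?]. Qed.
Lemma ImM x y : Im (x * y) = Re x * Im y + Im x * Re y.
Proof. by case: x y => [? ?] [? ?]. Qed.
Lemma ReJ x : Re (conjc x) = Re x. Proof. by case: x. Qed.
Lemma ImJ x : Im (conjc x) = - Im x. Proof. by case: x. Qed.
Lemma ReCx k l : Re (k +i* l) = k. Proof. by []. Qed.
Lemma ImCx k l : Im (k +i* l) = l. Proof. by []. Qed.
Lemma complexP x y : Re x = Re y -> Im x = Im y -> x = y.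
Proof. by case: x y => [? ?] [? ?] /= -> ->. Qed.

Definition ReImE := (ReD, ImD, ReN, ImN, ReM, ImM, ReJ, ImJ, ReCx, ImCx).
End ComplexParts.

Lemma morphN_of_morphD (U V : zmodType) (f : U -> V) :
  {morph f : u v / u + v} -> {morph f : u / - u}.
Proof.
move=> fD u; have f0 : f 0 = 0 by apply: (addrI (f 0)); rewrite -fD !addr0.
by apply/eqP; rewrite -addr_eq0 -fD addNr f0.
Qed.

Section InnerProduct.
Variables (R : realType) (H : lmodType R[i]) (ip : H -> H -> R[i]).
Hypothesis ip_inner : is_inner_product ip.
Local Open Scope complex_scope.

Lemma ipZDl a x y z : ip (a *: x + y) z = a * ip x z + ip y z.
Proof. by case: ip_inner => + _ _ _; apply. Qed.
Lemma ipC x y : ip y x = conjc (ip x y).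
Proof. by case: ip_inner => _ + _ _; apply. Qed.
Lemma ip_ge0 x : 0 <= ip x x.
Proof. by case: ip_inner => _ _ + _; apply. Qed.
Lemma ip_eq0 x : ip x x = 0 -> x = 0.
Proof. by case: ip_inner => _ _ _; apply. Qed.

Lemma ip0l z : ip 0 z = 0.
Proof.
have h := ipZDl 1 0 0 z; rewrite scaler0 addr0 mul1r in h.
by apply: (addrI (ip 0 z)); rewrite addr0 -h.
Qed.
Lemma ipDl x y z : ip (x + y) z = ip x z + ip y z.
Proof. by rewrite -[x]scale1r ipZDl mul1r scale1r. Qed.
Lemma ipZl a x z : ip (a *: x) z = a * ip x z.
Proof. by rewrite -[a *: x]addr0 ipZDl ip0l addr0. Qed.
Lemma ipNl x z : ip (- x) z = - ip x z.
Proof. by rewrite -scaleN1r ipZl mulN1r. Qed.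
Lemma ipBl x y z : ip (x - y) z = ip x z - ip y z.
Proof. by rewrite ipDl ipNl. Qed.
Lemma ip0r z : ip z 0 = 0.
Proof. by rewrite ipC ip0l rmorph0. Qed.
Lemma ipDr x y z : ip z (x + y) = ip z x + ip z y.
Proof. by rewrite ipC ipDl rmorphD /= -!ipC. Qed.
Lemma ipZr a x z : ip z (a *: x) = conjc a * ip z x.
Proof. by rewrite ipC ipZl rmorphM /= -ipC. Qed.
Lemma ipNr x z : ip z (- x) = - ip z x.
Proof. by rewrite ipC ipNl rmorphN /= -ipC. Qed.
Lemma ipBr x y z : ip z (x - y) = ip z x - ip z y.
Proof. by rewrite ipDr ipNr. Qed.

Definition ipE := (ipDl, ipDr, ipNl, ipNr, ipZl, ipZr, ipBl, ipBr, ip0l, ip0r).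

Lemma Re_ipC x y : Re (ip y x) = Re (ip x y).
Proof. by rewrite ipC ReJ. Qed.

Lemma ip_inj u v : (forall z, ip z u = ip z v) -> u = v.
Proof.
by move=> uv; apply/eqP; rewrite -subr_eq0; apply/eqP/ip_eq0; rewrite ipBr uv subrr.
Qed.

Lemma hnorm_ge0 x : 0 <= hnorm ip x.
Proof. exact: sqrtr_ge0. Qed.

Lemma ip_self x : ip x x = (hnorm ip x ^+ 2)%:C.
Proof.
have := ip_ge0 x; rewrite lecE => /andP[/eqP Im0 Re_ge0].
by apply: complexP; rewrite /= ?sqr_sqrtr.
Qed.

Lemma hnorm_eq0 x : hnorm ip x = 0 -> x = 0.
Proof. by move=> x0; apply: ip_eq0; rewrite ip_self x0 expr0n. Qed.

Lemma hnorm0 : hnorm ip 0 = 0.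
Proof. by rewrite /hnorm ip0l sqrtr0. Qed.

Lemma hnorm_scale_unit (w : R[i]) u : w * conjc w = 1 -> hnorm ip (w *: u) = hnorm ip u.
Proof. by move=> w1; rewrite /hnorm ipZl ipZr mulrA w1 mul1r. Qed.

Lemma hnorm_parallelogram x y :
  hnorm ip (x + y) ^+ 2 + hnorm ip (x - y) ^+ 2 = 2 * (hnorm ip x ^+ 2 + hnorm ip y ^+ 2).
Proof.
have := congr1 Re (ip_self (x + y)); have := congr1 Re (ip_self (x - y)).
rewrite !ipE !ReImE !ip_self /= Re_ipC => <- <-; ring.
Qed.

Lemma Re_ip_le u v : Re (ip u v) <= hnorm ip u * hnorm ip v.
Proof.
have [uv_gt0|] := ltP 0 (hnorm ip u * hnorm ip v); last first.
  rewrite le_eqVlt ltNge mulr_ge0 ?hnorm_ge0 // orbF mulf_eq0.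
  by case/orP => /eqP/hnorm_eq0 ->; rewrite (ip0l, ip0r) hnorm0 (mul0r, mulr0).
have := congr1 Re (ip_self ((hnorm ip v)%:C *: u - (hnorm ip u)%:C *: v)).
rewrite !ipE !ReImE !ip_self /= Re_ipC => e.
have := sqr_ge0 (hnorm ip ((hnorm ip v)%:C *: u - (hnorm ip u)%:C *: v)); rewrite -e; nra.
Qed.

Lemma hnorm_scale_real (k : R) u : 0 <= k -> hnorm ip (k%:C *: u) = k * hnorm ip u.
Proof.
move=> k_ge0; rewrite /hnorm ipZl ipZr ip_self /= !(mulr0, mul0r, subr0, oppr0).
by rewrite mulrA -expr2 -exprMn !sqrtr_sqr !ger0_norm ?mulr_ge0 ?hnorm_ge0.
Qed.

Lemma adjoint_additive (B Bs : H -> H) :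
  is_adjoint ip B Bs -> {morph Bs : u v / u + v}.
Proof. by move=> adj u v; apply: ip_inj => z; rewrite -adj !ipDr -!adj. Qed.

Lemma quadratic_form_le (T : H -> H) (f : R[i] -> R) (M : R) :
  (forall a u, T (a *: u) = a *: T u) ->
  (forall (k : R) z, 0 <= k -> f (k%:C * z) = k * f z) ->
  (forall u, hnorm ip u = 1 -> f (ip (T u) u) <= M) ->
  forall z, f (ip (T z) z) <= M * hnorm ip z ^+ 2.
Proof.
move=> TZ fZ f_le z.
have f0 : f 0 = 0 by have := fZ 0 0 (lexx 0); rewrite mulr0 mul0r.
have [/hnorm_eq0 -> | z_neq0] := eqVneq (hnorm ip z) 0.
  by rewrite ip0r f0 hnorm0 expr0n mulr0.
have z_gt0 : 0 < hnorm ip z by rewrite lt_def z_neq0 hnorm_ge0.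
set u := (hnorm ip z)^-1%:C *: z.
have u_unit : hnorm ip u = 1.
  by rewrite hnorm_scale_real ?invr_ge0 ?hnorm_ge0 // mulVf.
have -> : z = (hnorm ip z)%:C *: u.
  by rewrite scalerA -rmorphM mulfV // scale1r.
rewrite TZ ipZl ipZr conjc_real mulrA -rmorphM fZ ?mulr_ge0 ?hnorm_ge0 //.
by rewrite hnorm_scale_real ?hnorm_ge0 // u_unit mulr1 mulrC -expr2 ler_wpM2r ?sqr_ge0 ?f_le.
Qed.

Lemma opnorm_le (T : H -> H) (M : R) : 0 <= M ->
  (forall x, hnorm ip (T x) <= M * hnorm ip x) -> opnorm ip T <= M.
Proof.
move=> M_ge0 T_le; apply: ge_sup.
  by exists (hnorm ip (T 0)), 0 => //; rewrite /= hnorm0 ler01.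
move=> _ [x /= x_le1 <-]; apply: le_trans (T_le x) _.
by rewrite -[leRHS]mulr1 ler_wpM2l.
Qed.

Section SelfAdjoint.
Variables (T : H -> H) (c : R).
Hypotheses (TD : {morph T : u v / u + v}) (T_sym : is_adjoint ip T T).
Hypothesis T_numrad : forall z, `|Re (ip (T z) z)| <= c * hnorm ip z ^+ 2.

Lemma selfadjoint_polarization x y :
  4 * Re (ip (T x) y) <= 2 * c * (hnorm ip x ^+ 2 + hnorm ip y ^+ 2).
Proof.
have TN := morphN_of_morphD TD.
have polar : Re (ip (T (x + y)) (x + y)) - Re (ip (T (x - y)) (x - y))
    = 4 * Re (ip (T x) y).
  rewrite !TD TN !ipE !ReImE (T_sym y x) (Re_ipC (T x) y); ring.
have := T_numrad (x + y); have := T_numrad (x - y).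
rewrite !ler_norml => /andP[lb _] /andP[_ ub].
have -> : 2 * c * (hnorm ip x ^+ 2 + hnorm ip y ^+ 2)
    = c * (hnorm ip (x + y) ^+ 2 + hnorm ip (x - y) ^+ 2).
  by rewrite hnorm_parallelogram; ring.
lra.
Qed.

Lemma selfadjoint_hnorm_le x : 0 < c -> hnorm ip (T x) <= c * hnorm ip x.
Proof.
move=> c_gt0; set t := hnorm ip (T x).
have := selfadjoint_polarization x (c^-1%:C *: T x).
rewrite ipZr ip_self hnorm_scale_real ?invr_ge0 ?(ltW c_gt0) // !ReImE /= -/t.
rewrite !(mulr0, oppr0, subr0) => polar.
have n_ge0 := hnorm_ge0 x; have t_ge0 : 0 <= t := hnorm_ge0 (T x).
rewrite -ler_sqr ?nnegrE ?mulr_ge0 ?(ltW c_gt0) //.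
have := ler_wpM2l (ltW c_gt0) polar.
have -> : c * (4 * (c^-1 * t ^+ 2)) = 4 * t ^+ 2 by field; rewrite gt_eqF.
have -> : c * (2 * c * (hnorm ip x ^+ 2 + (c^-1 * t) ^+ 2))
    = 2 * (c * hnorm ip x) ^+ 2 + 2 * t ^+ 2 by field; rewrite gt_eqF.
lra.
Qed.

End SelfAdjoint.

Section Commutator.
Variables (B Bs : H -> H).
Hypotheses (BD : {morph B : u v / u + v}) (B_adj : is_adjoint ip B Bs).

Let re_part u := (2^-1)%:C *: (B u + Bs u).
Let im_part u := (0 +i* - 2^-1) *: (B u - Bs u). (* (B u - Bs u) / 2i *)

Lemma ip_adjl u v : ip (Bs u) v = conjc (ip (B v) u).
Proof. by rewrite ipC -B_adj. Qed.

Lemma ip_selfcommutator x y :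
  ip (Bs (B x) - B (Bs x)) y = ip (B x) (B y) - ip (Bs x) (Bs y).
Proof. by rewrite ipBl ip_adjl -ipC (B_adj (Bs x)). Qed.

Lemma ip_selfcommutator_cartesian x y :
  ip (B x) (B y) - ip (Bs x) (Bs y) =
  2%:C * (ip ('i *: im_part x) (re_part y) + ip (- 'i *: re_part x) (im_part y)).
Proof.
have i_half : 'i * (0 +i* - 2^-1) = (2^-1)%:C :> R[i].
  by apply: complexP; rewrite !ReImE /=; ring.
have half_half : (2^-1)%:C + (2^-1)%:C = 1 :> R[i].
  by apply: complexP; rewrite !ReImE /= ?addr0 //; field.
have BE u : B u = re_part u + 'i *: im_part u.
  rewrite /re_part /im_part scalerA i_half -scalerDr addrACA subrr addr0.
  by rewrite scalerDr -scalerDl half_half scale1r.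
have BsE u : Bs u = re_part u - 'i *: im_part u.
  rewrite /re_part /im_part scalerA i_half -scalerBr opprB addrC addrA subrK.
  by rewrite scalerDr -scalerDl half_half scale1r.
have conj_i : conjc 'i = - 'i :> R[i] by apply: complexP; rewrite !ReImE /= ?oppr0.
have two : 2%:C = 1 + 1 :> R[i] by apply: complexP; rewrite !ReImE /= ?addr0.
rewrite (BE x) (BE y) (BsE x) (BsE y) !ipE conj_i two; ring.
Qed.

Lemma re_part_adjoint : is_adjoint ip re_part re_part.
Proof.
move=> u v; rewrite /re_part !ipE B_adj ip_adjl -ipC -B_adj conjc_real; ring.
Qed.

Lemma im_part_adjoint : is_adjoint ip im_part im_part.
Proof.
move=> u v; rewrite /im_part !ipE B_adj ip_adjl -ipC -B_adj.
by apply: complexP; rewrite !ReImE /=; ring.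
Qed.

Lemma Re_ip_re_part z : Re (ip (re_part z) z) = Re (ip (B z) z).
Proof. by rewrite /re_part !ipE ip_adjl !ReImE /=; field. Qed.

Lemma Re_ip_im_part z : Re (ip (im_part z) z) = Im (ip (B z) z).
Proof. by rewrite /im_part !ipE ip_adjl !ReImE /=; field. Qed.

Lemma re_partD : {morph re_part : u v / u + v}.
Proof.
by move=> u v; rewrite /re_part BD (adjoint_additive B_adj) -scalerDr addrACA.
Qed.

Lemma im_partD : {morph im_part : u v / u + v}.
Proof.
move=> u v; rewrite /im_part BD (adjoint_additive B_adj) -scalerDr opprD.
by rewrite addrACA.
Qed.

Lemma selfcommutator_hnorm_le (a b : R) : 0 < a -> 0 < b ->
  (forall z, `|Re (ip (B z) z)| <= a * hnorm ip z ^+ 2) ->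
  (forall z, `|Im (ip (B z) z)| <= b * hnorm ip z ^+ 2) ->
  forall x, hnorm ip (Bs (B x) - B (Bs x)) <= 4 * a * b * hnorm ip x.
Proof.
move=> a_gt0 b_gt0 B_re B_im x.
have re_le u : hnorm ip (re_part u) <= a * hnorm ip u.
  apply: selfadjoint_hnorm_le a_gt0; [exact: re_partD | exact: re_part_adjoint |].
  by move=> z; rewrite Re_ip_re_part.
have im_le u : hnorm ip (im_part u) <= b * hnorm ip u.
  apply: selfadjoint_hnorm_le b_gt0; [exact: im_partD | exact: im_part_adjoint |].
  by move=> z; rewrite Re_ip_im_part.
have i_unit : 'i * conjc 'i = 1 :> R[i] by apply: complexP; rewrite !ReImE /=; ring.
have Ni_unit : - 'i * conjc (- 'i) = 1 :> R[i].
  by apply: complexP; rewrite !ReImE /=; ring.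
set y := Bs (B x) - B (Bs x).
have n_ge0 := hnorm_ge0 x; have m_ge0 : 0 <= hnorm ip y := hnorm_ge0 y.
have : hnorm ip y ^+ 2 <= 4 * a * b * hnorm ip x * hnorm ip y.
  have -> : hnorm ip y ^+ 2 = Re (ip y y) by rewrite ip_self.
  rewrite {1}/y ip_selfcommutator ip_selfcommutator_cartesian ReM /= mul0r subr0.
  have -> : 4 * a * b * hnorm ip x * hnorm ip y
      = 2 * (b * hnorm ip x * (a * hnorm ip y) + a * hnorm ip x * (b * hnorm ip y)).
    by ring.
  rewrite ler_pM2l // ReD; apply: lerD.
  - apply: le_trans (Re_ip_le _ _) _; rewrite hnorm_scale_unit //.
    by apply: ler_pM; rewrite ?hnorm_ge0.
  - apply: le_trans (Re_ip_le _ _) _; rewrite hnorm_scale_unit //.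
    by apply: ler_pM; rewrite ?hnorm_ge0.
have k_gt0 : 0 < 4 * a * b by rewrite !mulr_gt0.
have [-> _|y_neq0] := eqVneq (hnorm ip y) 0; first by rewrite mulr_ge0 // ltW.
have y_gt0 : 0 < hnorm ip y by rewrite lt_def y_neq0.
by move=> sq; rewrite -(ler_pM2r y_gt0) -expr2.
Qed.

End Commutator.

End InnerProduct.

Lemma ellipse_regionP (R : realType) (cx cy a b p q : R) (z : R[i]) :
  0 < a -> 0 < b -> ellipse_region cx cy a b p q (toR2 z) ->
  exists s t, [/\ `|s| <= a, `|t| <= b &
    z = (cx +i* cy)%C + (p +i* q)%C * (s +i* t)%C].
Proof.
move=> a_gt0 b_gt0 [s [t [st_le1 [Rez Imz]]]].
have sq_le (u d : R) : 0 < d -> (u / d) ^+ 2 <= 1 -> `|u| <= d.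
  move=> d_gt0; rewrite expr_div_n ler_pdivrMr ?exprn_gt0 // mul1r => u_le.
  by rewrite ler_norml; apply/andP; split; nra.
exists s, t; split; [apply: sq_le a_gt0 _ | apply: sq_le b_gt0 _ |].
- by have := sqr_ge0 (t / b); lra.
- by have := sqr_ge0 (s / a); lra.
by apply: complexP; rewrite !ReImE /= ?Rez ?Imz; ring.
Qed.

Section EllipticalNumericalRange.
Variables (R : realType) (H : lmodType R[i]) (ip : H -> H -> R[i]) (A As : H -> H).
Hypotheses (ip_inner : is_inner_product ip) (A_lin : linear A)
  (A_adj : is_adjoint ip A As).
Local Open Scope complex_scope.
Variables (c w : R[i]).
Hypothesis w_unit : w * conjc w = 1.

Let B u := conjc w *: (A u - c *: u).
Let Bs u := w *: (As u - conjc c *: u).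

Lemma affine_adjoint : is_adjoint ip B Bs.
Proof. by move=> u v; rewrite /B /Bs !(ipE ip_inner) conjcK A_adj; ring. Qed.

Lemma affine_selfcommutator x : As (A x) - A (As x) = Bs (B x) - B (Bs x).
Proof.
apply: (ip_inj ip_inner) => y.
rewrite [LHS](ipC ip_inner) [RHS](ipC ip_inner); congr conjc.
rewrite (ip_selfcommutator ip_inner A_adj) (ip_selfcommutator ip_inner affine_adjoint).
have A_adjr u v : ip u (A v) = ip (As u) v.
  by rewrite (ipC ip_inner) A_adj -(ipC ip_inner).
rewrite /B /Bs !(ipE ip_inner) !conjcK !A_adj !A_adjr -[LHS]mul1r -w_unit; ring.
Qed.

Lemma opnorm_selfcommutator_le_rectangle (a b : R) : 0 < a -> 0 < b ->
  (forall u, hnorm ip u = 1 -> exists s t,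
     [/\ `|s| <= a, `|t| <= b & ip (A u) u = c + w * (s +i* t)]) ->
  opnorm ip (fun x => As (A x) - A (As x)) <= 4 * a * b.
Proof.
move=> a_gt0 b_gt0 W_rect.
have AD u v : A (u + v) = A u + A v by have := A_lin 1 u v; rewrite !scale1r.
have AZ k u : A (k *: u) = k *: A u.
  have A0 : A 0 = 0 by apply: (addrI (A 0)); rewrite -AD !addr0.
  by rewrite -[k *: u]addr0 A_lin A0 addr0.
have BD : {morph B : u v / u + v}.
  by move=> u v; rewrite /B AD [c *: (u + v)]scalerDr opprD addrACA scalerDr.
have BZ k u : B (k *: u) = k *: B u.
  by rewrite /B AZ !scalerBr !scalerA; congr (_ *: _ - _ *: _); ring.
have B_unit u : hnorm ip u = 1 -> exists s t,
    [/\ `|s| <= a, `|t| <= b & ip (B u) u = s +i* t].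
  move=> u_unit; have [s [t [s_le t_le Au]]] := W_rect u u_unit.
  exists s, t; split=> //.
  have uu : ip u u = 1 by rewrite (ip_self ip_inner) u_unit expr1n.
  rewrite /B !(ipE ip_inner) uu Au mulr1 addrAC subrr add0r.
  by rewrite mulrA (mulrC (conjc w)) w_unit mul1r.
have B_re z : `|Re (ip (B z) z)| <= a * hnorm ip z ^+ 2.
  apply: (quadratic_form_le ip_inner (f := fun z => `|Re z|)) => //.
    by move=> k y k_ge0; rewrite ReM /= mul0r subr0 normrM ger0_norm.
  by move=> u /B_unit [s [t [s_le _ ->]]].
have B_im z : `|Im (ip (B z) z)| <= b * hnorm ip z ^+ 2.
  apply: (quadratic_form_le ip_inner (f := fun z => `|Im z|)) => //.
    by move=> k y k_ge0; rewrite ImM /= mul0r addr0 normrM ger0_norm.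
  by move=> u /B_unit [s [t [_ t_le ->]]].
apply: (opnorm_le ip_inner); first by rewrite !mulr_ge0 // ltW.
move=> x; rewrite affine_selfcommutator.
exact: (selfcommutator_hnorm_le ip_inner BD affine_adjoint).
Qed.

End EllipticalNumericalRange.

Lemma lebesgue_measure_le (R : realType) (A B : set R) : (A `<=` B)%classic ->
  (lebesgue_measure A <= lebesgue_measure B)%E.
Proof.
move=> AB; rewrite /lebesgue_measure /lebesgue_stieltjes_measure /measure_extension.
exact: le_outer_measure.
Qed.

Lemma ge0_le_integralT d (T : measurableType d) (R : realType)
    (mu : {measure set T -> \bar R}) (f g : T -> \bar R) :
  (forall x, 0 <= f x)%E -> (forall x, f x <= g x)%E ->
  (\int[mu]_x f x <= \int[mu]_x g x)%E.
Proof.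
move=> f_ge0 fg; have g_ge0 x : (0 <= g x)%E := le_trans (f_ge0 x) (fg x).
rewrite !ge0_integralTE //; apply: le_ereal_sup => _ [h hf <-].
by exists h => //= x; apply: le_trans (fg x).
Qed.

Lemma lee_of_forall_ltr (R : realType) (x : R) (A : \bar R) : (0 <= A)%E ->
  (forall z, 0 < z < x -> (z%:E <= A)%E) -> (x%:E <= A)%E.
Proof.
case: A => [r | _ _ | //]; last by rewrite leey.
rewrite !lee_fin => r_ge0 zA; rewrite leNgt; apply/negP => r_lt_x.
have /zA : 0 < (r + x) / 2 < x by apply/andP; split; lra.
by rewrite lee_fin; lra.
Qed.

Section Semicircle.
Variable R : realType.
Local Open Scope classical_set_scope.
Local Open Scope ring_scope.

Definition semicircle_primitive (r : R) := r * Num.sqrt (1 - r ^+ 2) + asin r.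

Lemma is_derive_one_minus_sqr (r : R) :
  is_derive r 1 (fun y : R => 1 - y ^+ 2) (- (2 * r)).
Proof.
apply: is_derive_eq.
by rewrite add0r mul1r -[r%:A]/(r * 1) mulr1 -mulr2n mulr_natl.
Qed.

Lemma is_derive_semicircle_primitive (r : R) : -1 < r < 1 ->
  is_derive r 1 semicircle_primitive (2 * Num.sqrt (1 - r ^+ 2)).
Proof.
move=> r_in; set s := Num.sqrt (1 - r ^+ 2).
have r2_lt1 : 0 < 1 - r ^+ 2 by case/andP: r_in => ? ?; nra.
have ds : is_derive r 1 (Num.sqrt \o (fun y : R => 1 - y ^+ 2)) ((2 * s)^-1 * - (2 * r)).
  exact: (is_derive1_comp (f := Num.sqrt) (g := fun y : R => 1 - y ^+ 2) (x := r))
    (is_derive1_sqrt r2_lt1) (is_derive_one_minus_sqr r).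
have -> : semicircle_primitive = @id R * (Num.sqrt \o (fun y => 1 - y ^+ 2)) + @asin R.
  by apply/funext.
have := is_deriveD (is_deriveM (is_derive_id r 1) ds) (is_derive1_asin r_in).
move/is_derive_eq; apply.
rewrite -[r *: _]/(r * _) -[(_)%:A]/(_ * 1) -[(Num.sqrt \o _) r]/s.
have s_gt0 : 0 < s by rewrite sqrtr_gt0.
have r2 : r ^+ 2 = 1 - s ^+ 2 by rewrite sqr_sqrtr ?ltW //; ring.
have sr : r * ((2 * s)^-1 * - (2 * r)) = - r ^+ 2 / s by field; rewrite gt_eqF.
by rewrite -/s sr r2; field; rewrite gt_eqF.
Qed.

Lemma semicircle_primitive_sin (t : R) : - (pi / 2) <= t <= pi / 2 ->
  semicircle_primitive (sin t) = sin t * cos t + t.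
Proof.
move=> t_in; rewrite /semicircle_primitive sinK ?in_itv //= sin2cos2 opprB addrCA.
by rewrite subrr addr0 sqrtr_sqr ger0_norm // cos_ge0_pihalf.
Qed.

Section ScaledSemicircle.
Variables (cx W c : R).
Hypothesis W_gt0 : 0 < W.

Let rr (y : R) := (y - cx) / W.
Let F := (c * W / 2) \*: (semicircle_primitive \o rr).
Let f := c \*: (Num.sqrt \o ((fun y : R => 1 - y ^+ 2) \o rr)).

Lemma is_derive_rescale (x : R) : is_derive x 1 rr W^-1.
Proof.
by apply: is_derive_eq; rewrite scaler0 add0r subr0 -[W^-1 *: 1]/(W^-1 * 1) mulr1.
Qed.

Lemma is_derive_scaled_primitive (x : R) : -1 < rr x < 1 -> is_derive x 1 F (f x).
Proof.
move=> x_in; have := is_deriveZ (c * W / 2) (is_derive1_comp (f := semicircle_primitive)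
  (is_derive_semicircle_primitive x_in) (is_derive_rescale x)).
move/is_derive_eq; apply; rewrite -[_ *: _]/(_ * _) /f /= -[c *: _]/(c * _).
by field; rewrite gt_eqF.
Qed.

Lemma derivable_scaled_semicircle (x : R) : -1 < rr x < 1 -> derivable f x 1.
Proof.
move=> x_in; have rr2 : 0 < 1 - rr x ^+ 2 by case/andP: x_in => ? ?; nra.
have dq := is_derive1_comp (f := fun y : R => 1 - y ^+ 2) (g := rr) (x := x)
  (is_derive_one_minus_sqr (rr x)) (is_derive_rescale x).
have ds := is_derive1_comp (f := Num.sqrt) (g := (fun y : R => 1 - y ^+ 2) \o rr)
  (x := x) (is_derive1_sqrt rr2) dq.
by case: (is_deriveZ c ds).
Qed.

(* The arc stops short of the endpoints cx -+ W, where asin is not differentiable; the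
   full area is recovered in ellipse_region_area_ge as a supremum over t. *)
Lemma integral_semicircle t : 0 < t < pi / 2 ->
  (\int[lebesgue_measure]_(x in `[(cx - W * sin t)%R, (cx + W * sin t)%R])
     ((c * Num.sqrt (1 - ((x - cx) / W) ^+ 2))%R)%:E
   = ((c * W * (sin t * cos t + t))%R)%:E)%E.
Proof.
move=> /andP[t_gt0 t_lt]; have pi_gt0 : 0 < pi :> R := pi_gt0 R.
have sin_gt0 : 0 < sin t by apply: sin_gt0_pihalf; rewrite t_gt0 t_lt.
have sin_lt1 : sin t < 1.
  have cos_gt0 : 0 < cos t by apply: cos_gt0_pihalf; rewrite t_lt andbT; lra.
  by have := cos2Dsin2 t; nra.
have Wsin_lt : W * sin t < W by rewrite -[ltRHS]mulr1 ltr_pM2l.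
have rr_in (x : R) : cx - W * sin t <= x <= cx + W * sin t -> -1 < rr x < 1.
  by rewrite /rr ltr_pdivlMr // ltr_pdivrMr // => /andP[? ?]; apply/andP; split; lra.
have ab : cx - W * sin t < cx + W * sin t by have := mulr_gt0 W_gt0 sin_gt0; lra.
have fc : {within `[(cx - W * sin t)%R, (cx + W * sin t)%R], continuous f}.
  apply: continuous_in_subspaceT => x; rewrite inE /= in_itv /=.
  by move=> /rr_in/derivable_scaled_semicircle/derivable1_diffP/differentiable_continuous.
have F_der (x : R) : cx - W * sin t <= x <= cx + W * sin t -> derivable F x 1.
  by move=> /rr_in/is_derive_scaled_primitive[].
have FLR : derivable_oo_LRcontinuous F (cx - W * sin t) (cx + W * sin t).
  split.
  - by move=> x; rewrite in_itv /= => /andP[? ?]; apply: F_der; rewrite !ltW.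
  - apply: cvg_at_right_filter; apply/differentiable_continuous/derivable1_diffP.
    by apply: F_der; rewrite lexx ltW.
  - apply: cvg_at_left_filter; apply/differentiable_continuous/derivable1_diffP.
    by apply: F_der; rewrite lexx ltW.
have Fd : {in `](cx - W * sin t)%R, (cx + W * sin t)%R[, derive1 F =1 f}.
  move=> x; rewrite in_itv /= => /andP[? ?].
  have /rr_in/is_derive_scaled_primitive dFx : cx - W * sin t <= x <= cx + W * sin t.
    by rewrite !ltW.
  by rewrite derive1E derive_val.
rewrite (continuous_FTC2 ab fc FLR Fd) -EFinB; congr (_%:E).
have rr_right : rr (cx + W * sin t) = sin t by rewrite /rr; field; rewrite gt_eqF.
have rr_left : rr (cx - W * sin t) = sin (- t) by rewrite sinN /rr; field; rewrite gt_eqF.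
rewrite /F /= rr_right rr_left !semicircle_primitive_sin ?sinN ?cosN.
- by rewrite -![(c * W / 2) *: _]/(c * W / 2 * _); field.
- by apply/andP; split; lra.
- by apply/andP; split; lra.
Qed.

End ScaledSemicircle.

End Semicircle.

Section EllipseArea.
Variables (R : realType) (cx cy a b p q : R).
Hypotheses (a_gt0 : 0 < a) (b_gt0 : 0 < b) (pq_unit : p ^+ 2 + q ^+ 2 = 1).
Local Open Scope classical_set_scope.
Local Open Scope ring_scope.

(* Centred at (cx, cy), the ellipse reads al (y - y0 x)^2 + (x / W)^2 <= 1, so its vertical
   section over x is an interval of half-length sqrt (1 - (x / W)^2) / sqrt al. *)
Let al := (q / a) ^+ 2 + (p / b) ^+ 2.
Let W := a * b * Num.sqrt al.

Lemma ellipse_coef_gt0 : 0 < al.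
Proof.
rewrite lt_def addr_ge0 ?sqr_ge0 // andbT paddr_eq0 ?sqr_ge0 // !sqrf_eq0.
rewrite !mulf_eq0 !invr_eq0 !(gt_eqF a_gt0, gt_eqF b_gt0) !orbF.
apply/andP => -[/eqP q0 /eqP p0].
by move: pq_unit; rewrite p0 q0 expr0n addr0 => /eqP; rewrite eq_sym oner_eq0.
Qed.

Lemma ellipse_xsection_itv x : ((x - cx) / W) ^+ 2 <= 1 ->
  let y0 := cy - (p * q / a ^+ 2 - p * q / b ^+ 2) * (x - cx) / al in
  let h := Num.sqrt (1 - ((x - cx) / W) ^+ 2) / Num.sqrt al in
  `[(y0 - h)%R, (y0 + h)%R] `<=` xsection (ellipse_region cx cy a b p q) x.
Proof.
move=> u_le1 y0 h y; rewrite /= in_itv /= => /andP[y_ge y_le].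
rewrite /xsection /= inE; set v := y - cy.
exists (p * (x - cx) + q * v), (- q * (x - cx) + p * v); split; last first.
  congr pair.
  - transitivity (cx + (p ^+ 2 + q ^+ 2) * (x - cx)); last ring.
    by rewrite pq_unit mul1r addrC subrK.
  - transitivity (cy + (p ^+ 2 + q ^+ 2) * v); last ring.
    by rewrite pq_unit mul1r addrC subrK.
have al_gt0 := ellipse_coef_gt0; have sal_gt0 : 0 < Num.sqrt al by rewrite sqrtr_gt0.
have W2 : W ^+ 2 = a ^+ 2 * b ^+ 2 * al by rewrite /W !exprMn sqr_sqrtr // ltW.
have al_ab : (q * b) ^+ 2 + (p * a) ^+ 2 = al * (a * b) ^+ 2.
  by rewrite /al; field; rewrite !gt_eqF.
have -> : ((p * (x - cx) + q * v) / a) ^+ 2 + ((- q * (x - cx) + p * v) / b) ^+ 2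
    = al * (y - y0) ^+ 2 + (p ^+ 2 + q ^+ 2) ^+ 2 * ((x - cx) / W) ^+ 2.
  rewrite !expr_div_n W2 /y0 /v /al; field.
  by rewrite !gt_eqF //= al_ab mulr_gt0 // exprn_gt0 // mulr_gt0.
have h2 : al * h ^+ 2 = 1 - ((x - cx) / W) ^+ 2.
  rewrite /h expr_div_n !sqr_sqrtr ?subr_ge0 // ?ltW //.
  by field; rewrite !gt_eqF // /W !mulr_gt0.
have h_ge0 : 0 <= h by rewrite /h divr_ge0 // sqrtr_ge0.
have : (y - y0) ^+ 2 <= h ^+ 2 by nra.
rewrite pq_unit expr1n mul1r -(ler_pM2l al_gt0) h2; lra.
Qed.

Lemma ellipse_area_ge_arc t : 0 < t < pi / 2 ->
  (((2 * (a * b) * t)%R)%:E <= (lebesgue_measure \x lebesgue_measure)%E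
                                 (ellipse_region cx cy a b p q))%E.
Proof.
move=> t_in; have /andP[t_gt0 t_lt] := t_in.
have al_gt0 := ellipse_coef_gt0; have sal_gt0 : 0 < Num.sqrt al by rewrite sqrtr_gt0.
have W_gt0 : 0 < W by rewrite /W !mulr_gt0.
pose c := 2 / Num.sqrt al.
have cW : c * W = 2 * (a * b) by rewrite /c /W; field; rewrite gt_eqF.
have sin_gt0 : 0 < sin t by apply: sin_gt0_pihalf; rewrite t_gt0 t_lt.
have cos_gt0 : 0 < cos t.
  by apply: cos_gt0_pihalf; rewrite t_lt andbT; have := pi_gt0 R; lra.
apply: (@le_trans _ _ ((c * W * (sin t * cos t + t))%R)%:E).
  by rewrite lee_fin cW ler_pM2l ?mulr_gt0 // lerDr mulr_ge0 ?ltW.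
have := integral_semicircle cx c W_gt0 t_in; rewrite integral_mkcond => <-.
apply: ge0_le_integralT => x; rewrite patchE; case: ifP => [x_in | _].
- by rewrite lee_fin mulr_ge0 ?sqrtr_ge0 // divr_ge0 ?ltW.
- by [].
- move: x_in; rewrite inE /= in_itv /= => /andP[x_ge x_le].
  have u_le1 : ((x - cx) / W) ^+ 2 <= 1.
    have uW : (x - cx) / W * W = x - cx by field; rewrite gt_eqF.
    have := sin_le1 t; set r := (x - cx) / W in uW * => sin_le1.
    have : -1 <= r <= 1 by apply/andP; split; nra.
    by case/andP=> ? ?; nra.
  apply: le_trans (lebesgue_measure_le (ellipse_xsection_itv u_le1)).
  set h := Num.sqrt (1 - ((x - cx) / W) ^+ 2) / Num.sqrt al.
  have -> : c * Num.sqrt (1 - ((x - cx) / W) ^+ 2) = 2 * h.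
    by rewrite /c /h; field; rewrite gt_eqF.
  have h_ge0 : 0 <= h by rewrite /h divr_ge0 ?sqrtr_ge0.
  rewrite lebesgue_measure_itv /= lte_fin; case: ifP => [_ | /negbT].
    by rewrite -EFinB lee_fin; lra.
  by rewrite -leNgt lee_fin; lra.
- exact: measure_ge0.
Qed.

Lemma ellipse_region_area_ge : ((pi * (a * b))%:E <=
  (lebesgue_measure \x lebesgue_measure)%E (ellipse_region cx cy a b p q))%E.
Proof.
have ab_gt0 : 0 < 2 * (a * b) by rewrite !mulr_gt0.
apply: lee_of_forall_ltr; first exact: measure_ge0.
move=> z /andP[z_gt0 z_lt].
have t_in : 0 < z / (2 * (a * b)) < pi / 2.
  have e : pi / 2 * (2 * (a * b)) = pi * (a * b) :> R by field.
  by rewrite divr_gt0 // ltr_pdivrMr // e.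
by have := ellipse_area_ge_arc t_in; rewrite mulrC divfK ?gt_eqF.
Qed.

End EllipseArea.

Theorem proposition5 (R : realType) (H : lmodType R[i]) (ip : H -> H -> R[i])
  (A Astar : H -> H) :
  is_hilbert ip -> linear A -> bounded_op ip A -> is_adjoint ip A Astar ->
  elliptical (numerical_range ip A) ->
  ((opnorm ip (fun x => Astar (A x) - A (Astar x)))%:E
     <= (4 / pi)%:E * area (numerical_range ip A))%E.
Proof.
move=> [ip_inner _] A_lin _ A_adj [cx [cy [a [b [p [q [a_gt0 b_gt0 pq_unit W_ell]]]]]]].
have W_sub : (@toR2 R @` numerical_range ip A `<=` ellipse_region cx cy a b p q)%classic.
  by rewrite -W_ell; apply: subset_closure.
have w_unit : (p +i* q)%C * conjc (p +i* q)%C = 1.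
  by apply: complexP; rewrite !ReImE /= ?mulrN ?opprK -?expr2 ?pq_unit // mulrC addNr.
have comm_le : opnorm ip (fun x => Astar (A x) - A (Astar x)) <= 4 * a * b.
  apply: (opnorm_selfcommutator_le_rectangle ip_inner A_lin A_adj w_unit) => // u u_unit.
  by apply: ellipse_regionP => //; apply: W_sub; exists (ip (A u) u) => //; exists u.
have pi_gt0 : 0 < pi :> R := pi_gt0 R.
rewrite /area W_ell; apply: le_trans (_ : (4 * a * b)%:E <= _)%E; first by rewrite lee_fin.
apply: le_trans (lee_wpmul2l _ (ellipse_region_area_ge cx cy a_gt0 b_gt0 pq_unit)).
  by rewrite -EFinM lee_fin !mulrA mulfVK ?gt_eqF.
by rewrite lee_fin divr_ge0 // ltW.
Qed.
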